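(* Let $(A;R)\in\mathcal C$ and let $X,Y$ be closed sets of $PG(A;R)$. Then $d(X\cup Y)=d(X)+d(Y)-d(X\cap Y)$ if and only if $X\cup Y\le A$ and $R|(X\cup Y)=(R|X)\cup(R|Y)$.
   Context: A set system is a pair $(A;R)$ where $R$ is a set of finite non-empty subsets of $A$; for $X\subseteq A$, $R[X]=\{r\in R:r\subseteq X\}$ and $\delta(X)=|X|-|R[X]|$; also $R|X=R[X]$. $\mathcal C$ is the class of finite set systems with $\delta(X)\ge0$ for all $X\subseteq A$. $X\le A$ means $\delta(X)\le\delta(X')$ for all $X\subseteq X'\subseteq A$. $d(X)=\min\{\delta(Y):X\subseteq Y\subseteq A\}$, $\mathrm{cl}(X)=\{y:d(X\cup\{y\})=d(X)\}$, and $PG(A;R)$ is the matroid $(A,\mathrm{cl})$; closed sets are $F$ with $\mathrm{cl}(F)=F$. *)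

From mathcomp Require Import all_boot all_order all_algebra.
Set Implicit Arguments. Unset Strict Implicit. Unset Printing Implicit Defensive.
Import Order.TTheory GRing.Theory Num.Theory.
Local Open Scope ring_scope.

Definition set_system (A : finType) (R : {set {set A}}) : Prop :=
  forall r, r \in R -> r != set0.

Definition restr (A : finType) (R : {set {set A}}) (X : {set A}) : {set {set A}} :=
  [set r in R | r \subset X].

Definition delta (A : finType) (R : {set {set A}}) (X : {set A}) : int :=
  (#|X|%:Z - #|restr R X|%:Z).

Definition in_C (A : finType) (R : {set {set A}}) : Prop :=
  set_system R /\ forall X : {set A}, 0 <= delta R X.

(* X <= A  (X is self-sufficient) *)
Definition ss (A : finType) (R : {set {set A}}) (X : {set A}) : Prop :=
  forall X' : {set A}, X \subset X' -> delta R X <= delta R X'.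

(* d(X) = min { delta(Y) : X ⊆ Y ⊆ A }  (the range is non-empty: Y = A) *)
Definition dd (A : finType) (R : {set {set A}}) (X : {set A}) : int :=
  \big[Num.min/delta R setT]_(Y : {set A} | X \subset Y) delta R Y.

Definition pg_cl (A : finType) (R : {set {set A}}) (X : {set A}) : {set A} :=
  [set y | dd R (y |: X) == dd R X].

Definition pg_closed (A : finType) (R : {set {set A}}) (F : {set A}) : Prop :=
  pg_cl R F = F.

From mathcomp Require Import all_boot all_order all_algebra.
From mathcomp Require Import zify.
Import Order.TTheory GRing.Theory Num.Theory.
Local Open Scope ring_scope.

(* A closed set is self-sufficient, and self-sufficiency is preserved by
   intersections.  The counting identity for unions and intersections gives
     delta(X u Y) + delta(X n Y) = delta(X) + delta(Y) - e(X,Y),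
   where the excess e(X,Y) = |R[X u Y]| - |R[X] u R[Y]| is a nonnegative
   integer vanishing exactly when R[X u Y] = R[X] u R[Y].  For closed X, Y the
   identity in the theorem thus reads d(X u Y) = delta(X u Y) + e(X,Y); since
   d(X u Y) <= delta(X u Y) and e(X,Y) >= 0, it holds iff both
   d(X u Y) = delta(X u Y) (self-sufficiency) and e(X,Y) = 0.
   The argument does not use the hypothesis that (A;R) lies in C. *)

Section PredimensionFacts.
Context {A : finType} (R : {set {set A}}).

Lemma dd_le_delta {X Y : {set A}} : X \subset Y -> dd R X <= delta R Y.
Proof. by move=> sXY; rewrite /dd (bigD1 Y) //= ge_min lexx. Qed.

Lemma dd_attained (X : {set A}) :
  exists2 Y : {set A}, X \subset Y & dd R X = delta R Y.
Proof.
rewrite /dd; apply: (big_ind (fun v => exists2 Y : {set A}, X \subset Y & v = delta R Y)).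
- by exists setT; rewrite ?subsetT.
- move=> _ _ [Y1 sXY1 ->] [Y2 sXY2 ->].
  by case: (leP (delta R Y1) (delta R Y2)) => _; [exists Y1 | exists Y2].
- by move=> Y sXY; exists Y.
Qed.

Lemma dd_mono {X X' : {set A}} : X \subset X' -> dd R X <= dd R X'.
Proof.
move=> sXX'; have [Z sX'Z ->] := dd_attained X'.
by apply: dd_le_delta; apply: subset_trans sX'Z.
Qed.

Lemma ss_iff_dd_delta (X : {set A}) : ss R X <-> dd R X = delta R X.
Proof.
split=> [ssX | eX X' sXX']; last by rewrite -eX dd_le_delta.
have [Z sXZ eZ] := dd_attained X.
by apply: le_anti; rewrite dd_le_delta //= eZ ssX.
Qed.

(* A closed set is self-sufficient: a superset Z realizing d(X) adds no new
   element y, since d(y |: X) is squeezed between d(X) and delta(Z). *)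
Lemma closed_ss {X : {set A}} : pg_closed R X -> ss R X.
Proof.
move=> clX; have [Z sXZ eZ] := dd_attained X.
have sZX : Z \subset X.
  apply/subsetP => y yZ; rewrite -clX inE; apply/eqP/le_anti.
  rewrite (dd_mono (subsetUr [set y] X)) andbT eZ dd_le_delta //.
  by rewrite subUset sub1set yZ sXZ.
have eXZ : X = Z by apply/eqP; rewrite eqEsubset sXZ sZX.
by apply/ss_iff_dd_delta; rewrite eZ eXZ.
Qed.

Lemma restrI (X Y : {set A}) : restr R (X :&: Y) = restr R X :&: restr R Y.
Proof. by apply/setP => r; rewrite !inE subsetI; case: (r \in R). Qed.

Lemma restrU_sub (X Y : {set A}) :
  restr R X :|: restr R Y \subset restr R (X :|: Y).
Proof.
apply/subsetP => r; rewrite !inE => /orP[] /andP[-> srZ] /=.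
  exact: subset_trans srZ (subsetUl _ _).
exact: subset_trans srZ (subsetUr _ _).
Qed.

Definition excess (X Y : {set A}) : nat :=
  (#|restr R (X :|: Y)| - #|restr R X :|: restr R Y|)%N.

Lemma excess0P (X Y : {set A}) :
  excess X Y = 0%N <-> restr R (X :|: Y) = restr R X :|: restr R Y.
Proof.
rewrite /excess; split=> [/eqP | ->]; last by rewrite subnn.
by rewrite subn_eq0 => leUI; apply/eqP; rewrite eq_sym eqEcard restrU_sub.
Qed.

Lemma delta_UI (X Y : {set A}) :
  delta R (X :|: Y) + delta R (X :&: Y) = delta R X + delta R Y - (excess X Y)%:Z.
Proof.
rewrite /delta /excess restrI.
have := cardsUI X Y; have := cardsUI (restr R X) (restr R Y).
have := subset_leq_card (restrU_sub X Y); lia.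
Qed.

Lemma delta_submod (X Y : {set A}) :
  delta R (X :|: Y) + delta R (X :&: Y) <= delta R X + delta R Y.
Proof. by rewrite delta_UI; lia. Qed.

(* Self-sufficient sets are closed under intersection: for Z containing X n Y,
   apply submodularity to (Z, X) and then to (Z n X, Y). *)
Lemma ss_meet {X Y : {set A}} : ss R X -> ss R Y -> ss R (X :&: Y).
Proof.
move=> ssX ssY Z sXYZ.
have eZXY : Z :&: X :&: Y = X :&: Y.
  by rewrite -setIA; apply/setIidPr.
have := delta_submod Z X; have := delta_submod (Z :&: X) Y.
have := ssX (Z :|: X) (subsetUr _ _); have := ssY (Z :&: X :|: Y) (subsetUr _ _).
rewrite eZXY; lia.
Qed.

End PredimensionFacts.

Theorem lemma6p2 (A : finType) (R : {set {set A}}) (X Y : {set A}) :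
  in_C R -> pg_closed R X -> pg_closed R Y ->
  (dd R (X :|: Y) = dd R X + dd R Y - dd R (X :&: Y) <->
   ss R (X :|: Y) /\ restr R (X :|: Y) = restr R X :|: restr R Y).
Proof.
move=> _ clX clY.
have ssX := closed_ss R clX; have ssY := closed_ss R clY.
have /ss_iff_dd_delta -> := ssX; have /ss_iff_dd_delta -> := ssY.
have /ss_iff_dd_delta -> := ss_meet R ssX ssY.
have -> : delta R X + delta R Y - delta R (X :&: Y) =
          delta R (X :|: Y) + (excess R X Y)%:Z.
  by have := delta_UI R X Y; lia.
rewrite ss_iff_dd_delta -excess0P.
have := dd_le_delta R (subxx (X :|: Y)).
split=> [|[-> ->]]; last by rewrite addr0.
by lia.
Qed.
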